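(* Let $E$ be a real Hilbert space with $\dim(E)\ge2$, $h\in E$ a unit vector, and $f:\mathbb{R}_{\ge0}\to\mathbb{R}_{\ge0}$ with $f(d)=0$ iff $d=0$. Let $x\preceq_f y\iff f(\|y_\perp-x_\perp\|)\le y_h-x_h$, and assume $(E,\preceq_f)$ is a sponge. Then $f(d)+f(e)\le\max(f(d+e),f(|d-e|))$ for all $d,e\in\mathbb{R}_{\ge0}$. If $\dim(E)\ge3$, then $f$ is square-superadditive, i.e. $f(\sqrt{d^2+e^2})\ge f(d)+f(e)$ for all $d,e\ge0$.
   Context: For $x\in E$ write $x=x_h h+x_\perp$ with $x_h=(x,h)$ and $x_\perp$ orthogonal to $h$. An oriented set $(S,\preceq)$ (with $\preceq$ reflexive and antisymmetric) is a sponge if every finite, nonempty, right-bounded subset has a join and every finite, nonempty, left-bounded subset has a meet. Here $P$ is right-bounded if some $s$ has $p\preceq s$ for all $p\in P$; the join of $P$ is an $x$ with $p\preceq x$ for all $p\in P$ and $x\preceq y$ whenever $p\preceq y$ for all $p\in P$; left-bounded and meet are defined dually. *)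

From HB Require Import structures.
From mathcomp Require Import all_boot all_order all_algebra.
From mathcomp Require Import reals.
Set Implicit Arguments. Unset Strict Implicit. Unset Printing Implicit Defensive.
Import Order.TTheory GRing.Theory Num.Theory.
Local Open Scope ring_scope.

Definition inner_product (R : realType) (E : lmodType R) (ip : E -> E -> R) : Prop :=
  [/\ (forall x y, ip x y = ip y x),
      (forall (a : R) (x y z : E), ip (a *: x + y) z = a * ip x z + ip y z),
      (forall x, 0 <= ip x x) &
      (forall x, ip x x = 0 -> x = 0)].

Definition ipnorm (R : realType) (E : lmodType R) (ip : E -> E -> R) (x : E) : R :=
  Num.sqrt (ip x x).

Definition ip_complete (R : realType) (E : lmodType R) (ip : E -> E -> R) : Prop :=
  forall u : nat -> E,
    (forall eps : R, 0 < eps -> exists N : nat, forall m n : nat,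
        (N <= m)%N -> (N <= n)%N -> ipnorm ip (u m - u n) < eps) ->
    exists l : E, forall eps : R, 0 < eps -> exists N : nat, forall n : nat,
        (N <= n)%N -> ipnorm ip (u n - l) < eps.

Definition hilbert (R : realType) (E : lmodType R) (ip : E -> E -> R) : Prop :=
  inner_product ip /\ ip_complete ip.

Definition dim_ge2 (R : realType) (E : lmodType R) (ip : E -> E -> R) : Prop :=
  exists u v : E, [/\ ip u u = 1, ip v v = 1 & ip u v = 0].
Definition dim_ge3 (R : realType) (E : lmodType R) (ip : E -> E -> R) : Prop :=
  exists u v w : E, [/\ ip u u = 1, ip v v = 1 & ip w w = 1] /\
                        [/\ ip u v = 0, ip u w = 0 & ip v w = 0].

Definition hcomp (R : realType) (E : lmodType R) (ip : E -> E -> R) (h x : E) : R :=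
  ip x h.
Definition perp (R : realType) (E : lmodType R) (ip : E -> E -> R) (h x : E) : E :=
  x - hcomp ip h x *: h.

Definition fle (R : realType) (E : lmodType R) (ip : E -> E -> R) (h : E)
  (f : R -> R) (x y : E) : Prop :=
  f (ipnorm ip (perp ip h y - perp ip h x)) <= hcomp ip h y - hcomp ip h x.

(* Oriented sets and sponges; finite subsets are represented by sequences. *)
Definition oriented (T : Type) (le : T -> T -> Prop) : Prop :=
  (forall x, le x x) /\ (forall x y, le x y -> le y x -> x = y).

Definition right_bounded (T : eqType) (le : T -> T -> Prop) (P : seq T) : Prop :=
  exists s, forall p, p \in P -> le p s.
Definition left_bounded (T : eqType) (le : T -> T -> Prop) (P : seq T) : Prop :=
  exists s, forall p, p \in P -> le s p.
Definition has_join (T : eqType) (le : T -> T -> Prop) (P : seq T) : Prop :=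
  exists x, (forall p, p \in P -> le p x) /\
            (forall y, (forall p, p \in P -> le p y) -> le x y).
Definition has_meet (T : eqType) (le : T -> T -> Prop) (P : seq T) : Prop :=
  exists x, (forall p, p \in P -> le x p) /\
            (forall y, (forall p, p \in P -> le y p) -> le y x).

Definition sponge (T : eqType) (le : T -> T -> Prop) : Prop :=
  [/\ oriented le,
      (forall P : seq T, P != [::] -> right_bounded le P -> has_join le P) &
      (forall P : seq T, P != [::] -> left_bounded le P -> has_meet le P)].

From HB Require Import structures.
From mathcomp Require Import all_boot all_order all_algebra.
From mathcomp Require Import reals.
From mathcomp Require Import ring lra.
Import Order.TTheory GRing.Theory Num.Theory.
Set Implicit Arguments.
Unset Strict Implicit.
Local Open Scope ring_scope.

(* The reflection x = x_h h + x_perp |-> x_h h - x_perp is an automorphism of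
   the order, so for U orthogonal to h it maps the upper bounds of {U, -U} to
   themselves; the join j of {U, -U} therefore satisfies j <= reflection of j,
   which forces f(2 |j_perp|) <= 0, i.e. j = t h lies on the axis, with
   f(|U|) <= t.  For W orthogonal to h, W + M h with
   M = max (f |W + U|, f |W - U|) bounds {U, -U}, hence t h <= W + M h and
   f(|W|) <= M - t <= M - f(|U|).  Taking W, U parallel gives the first
   inequality; taking them orthogonal, which needs two orthonormal vectors
   orthogonal to h and so dim E >= 3, gives the second. *)

Lemma unit_circle_orth (R : rcfType) (x y : R) :
  exists a b : R, a ^+ 2 + b ^+ 2 = 1 /\ a * x + b * y = 0.
Proof.
have [s0 | s_neq0] := eqVneq (x ^+ 2 + y ^+ 2) 0.
  have [x0 y0] : x = 0 /\ y = 0.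
    by move/eqP: s0; rewrite paddr_eq0 ?sqr_ge0 // !sqrf_eq0 => /andP[/eqP ? /eqP ?].
  by exists 1, 0; rewrite x0 y0; split; [rewrite expr1n expr0n addr0 | ring].
have s_gt0 : 0 < x ^+ 2 + y ^+ 2 by rewrite lt_def s_neq0 addr_ge0 ?sqr_ge0.
set r := Num.sqrt (x ^+ 2 + y ^+ 2).
have r_neq0 : r != 0 by rewrite gt_eqF // sqrtr_gt0.
have r2 : r ^+ 2 = x ^+ 2 + y ^+ 2 by rewrite sqr_sqrtr // ltW.
exists (y / r), (- x / r); split; last by field.
by rewrite !expr_div_n sqrrN -mulrDl addrC -r2 divff // expf_neq0.
Qed.

Section InnerProduct.
Variables (R : realType) (E : lmodType R) (ip : E -> E -> R).
Hypothesis ip_inner : inner_product ip.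

Lemma ipC x y : ip x y = ip y x. Proof. by case: ip_inner. Qed.

Lemma ipZDl a x y z : ip (a *: x + y) z = a * ip x z + ip y z.
Proof. by case: ip_inner. Qed.

Lemma ip0l z : ip 0 z = 0.
Proof. by have := ipZDl 1 0 0 z; rewrite scaler0 addr0 mul1r => ip0; lra. Qed.

Lemma ipDl x y z : ip (x + y) z = ip x z + ip y z.
Proof. by have := ipZDl 1 x y z; rewrite scale1r mul1r. Qed.

Lemma ipZl a x z : ip (a *: x) z = a * ip x z.
Proof. by rewrite -[a *: x]addr0 ipZDl ip0l addr0. Qed.

Lemma ipNl x z : ip (- x) z = - ip x z.
Proof. by rewrite -scaleN1r ipZl mulN1r. Qed.

Lemma ipDr x y z : ip z (x + y) = ip z x + ip z y.
Proof. by rewrite ipC ipDl !(ipC z). Qed.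

Lemma ipZr a x z : ip z (a *: x) = a * ip z x.
Proof. by rewrite ipC ipZl (ipC z). Qed.

Lemma ipNr x z : ip z (- x) = - ip z x.
Proof. by rewrite ipC ipNl (ipC z). Qed.

Lemma ipnormN x : ipnorm ip (- x) = ipnorm ip x.
Proof. by rewrite /ipnorm ipNl ipNr opprK. Qed.

Lemma ipnorm_eq0 x : ipnorm ip x = 0 -> x = 0.
Proof.
case: ip_inner => _ _ ip_ge0 ip_eq0 /eqP; rewrite sqrtr_eq0 => ip_le0.
by apply: ip_eq0; apply/eqP; rewrite eq_le ip_le0 ip_ge0.
Qed.

Lemma ipnormZ n a : ip n n = 1 -> ipnorm ip (a *: n) = `|a|.
Proof. by move=> n_unit; rewrite /ipnorm ipZl ipZr n_unit mulr1 -expr2 sqrtr_sqr. Qed.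

Definition orthonormal (u v : E) : Prop := [/\ ip u u = 1, ip v v = 1 & ip u v = 0].

Lemma ip_orthonormal u v a b c d : orthonormal u v ->
  ip (a *: u + b *: v) (c *: u + d *: v) = a * c + b * d.
Proof.
case=> uu vv uv; have vu : ip v u = 0 by rewrite ipC.
by rewrite !(ipDl, ipDr, ipZl, ipZr) uu vv uv vu; ring.
Qed.

Lemma ipnorm_orthonormal u v a b : orthonormal u v ->
  ipnorm ip (a *: u + b *: v) = Num.sqrt (a ^+ 2 + b ^+ 2).
Proof. by move=> uv; rewrite /ipnorm ip_orthonormal // -!expr2. Qed.

Lemma exists_unit_orth u v a : orthonormal u v -> exists n, ip n n = 1 /\ ip n a = 0.
Proof.
move=> uv; have [s [t [st1 st_orth]]] := unit_circle_orth (ip u a) (ip v a).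
by exists (s *: u + t *: v); rewrite ip_orthonormal // ipDl !ipZl -!expr2.
Qed.

Lemma exists_orthonormal_orth u v w a : orthonormal u v ->
  ip w w = 1 -> ip u w = 0 -> ip v w = 0 ->
  exists n m, orthonormal n m /\ ip n a = 0 /\ ip m a = 0.
Proof.
move=> uv ww uw vw.
have [s [t [st1 n_orth]]] := unit_circle_orth (ip u a) (ip v a).
(* n' is n turned by a right angle in span(u, v), so n', w span a plane orthogonal to n. *)
set n := s *: u + t *: v; set n' := (- t) *: u + s *: v.
have n'w : orthonormal n' w.
  split=> //; first by rewrite ip_orthonormal // -st1; ring.
  by rewrite ipDl !ipZl uw vw; ring.
have nw : ip n w = 0 by rewrite ipDl !ipZl uw vw; ring.
have [s' [t' [st1' m_orth]]] := unit_circle_orth (ip n' a) (ip w a).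
exists n, (s' *: n' + t' *: w); split; last by split; rewrite ipDl !ipZl.
split; rewrite ?ip_orthonormal // -?expr2 //.
by rewrite ipDr !ipZr nw ip_orthonormal //; ring.
Qed.

End InnerProduct.

Lemma in_pair (T : eqType) (P : T -> Prop) (a b : T) :
  (forall p, p \in [:: a; b] -> P p) <-> P a /\ P b.
Proof.
split=> [Pab | [Pa Pb] p]; last by rewrite !inE => /orP[] /eqP ->.
by split; apply: Pab; rewrite !inE eqxx ?orbT.
Qed.

Section SpongeOrder.
Variables (R : realType) (E : lmodType R) (ip : E -> E -> R) (h : E) (f : R -> R).
Hypotheses (ip_inner : inner_product ip) (h_unit : ip h h = 1).

Local Notation le := (fle ip h f).

Lemma perp_orth x : ip (perp ip h x) h = 0.
Proof.
by rewrite /perp (ipDl ip_inner) (ipNl ip_inner) (ipZl ip_inner) h_unit mulr1 subrr.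
Qed.

Lemma perp_hcompE x : perp ip h x + hcomp ip h x *: h = x.
Proof. by rewrite subrK. Qed.

Lemma hcomp_orth p : ip p h = 0 -> hcomp ip h p = 0.
Proof. by []. Qed.

Lemma hcomp_lift p t : ip p h = 0 -> hcomp ip h (p + t *: h) = t.
Proof. by move=> ph; rewrite /hcomp (ipDl ip_inner) (ipZl ip_inner) ph h_unit add0r mulr1. Qed.

Lemma perp_lift p t : ip p h = 0 -> perp ip h (p + t *: h) = p.
Proof. by move=> ph; rewrite /perp hcomp_lift // addrK. Qed.

Lemma hcomp_axis t : hcomp ip h (t *: h) = t.
Proof. by rewrite /hcomp (ipZl ip_inner) h_unit mulr1. Qed.

Lemma perp_axis t : perp ip h (t *: h) = 0.
Proof. by rewrite /perp hcomp_axis subrr. Qed.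

Lemma perp_id p : ip p h = 0 -> perp ip h p = p.
Proof. by move=> ph; rewrite /perp hcomp_orth // scale0r subr0. Qed.

Definition hreflect (x : E) : E := - perp ip h x + hcomp ip h x *: h.

Lemma hreflect_orth p : ip p h = 0 -> hreflect p = - p.
Proof. by move=> ph; rewrite /hreflect perp_id // hcomp_orth // scale0r addr0. Qed.

Lemma fle_hreflect x y : le (hreflect x) (hreflect y) = le x y.
Proof.
have Np_orth z : ip (- perp ip h z) h = 0 by rewrite (ipNl ip_inner) perp_orth oppr0.
by rewrite /fle /hreflect !hcomp_lift // !perp_lift // -opprD (ipnormN ip_inner).
Qed.

Hypothesis f_ge0 : forall d, 0 <= d -> 0 <= f d.
Hypothesis f_eq0 : forall d, 0 <= d -> f d = 0 -> d = 0.
Hypothesis has_joins :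
  forall P : seq E, P != [::] -> right_bounded le P -> has_join le P.

Lemma join_opp_on_axis U : ip U h = 0 -> exists t : R,
  [/\ le U (t *: h), le (- U) (t *: h) &
      forall y, le U y -> le (- U) y -> le (t *: h) y].
Proof.
move=> Uh; have NUh : ip (- U) h = 0 by rewrite (ipNl ip_inner) Uh oppr0.
have [j [/in_pair [Uj NUj] j_least]] : has_join le [:: U; - U].
  apply: has_joins => //; exists (f (ipnorm ip U) *: h); apply/in_pair.
  by rewrite /fle perp_axis hcomp_axis !perp_id // !hcomp_orth // subr0
    !sub0r opprK (ipnormN ip_inner).
have j_le_hreflect : le j (hreflect j).
  apply: j_least; apply/in_pair; split.
    by rewrite -[U]opprK -(hreflect_orth NUh) fle_hreflect.
  by rewrite -(hreflect_orth Uh) fle_hreflect.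
have perp_j : perp ip h j = 0.
  have p_orth : ip (- perp ip h j) h = 0 by rewrite (ipNl ip_inner) perp_orth oppr0.
  move: j_le_hreflect; rewrite /fle /hreflect hcomp_lift // perp_lift // subrr.
  set p := perp ip h j => fp_le0.
  have /(ipnorm_eq0 ip_inner) : ipnorm ip (- p - p) = 0.
    apply: f_eq0; first exact: sqrtr_ge0.
    by apply/le_anti; rewrite fp_le0 f_ge0 // sqrtr_ge0.
  rewrite -opprD -mulr2n -scaler_nat -scaleNr => /eqP.
  by rewrite scaler_eq0 oppr_eq0 pnatr_eq0 => /eqP.
have j_axis : j = hcomp ip h j *: h by rewrite -{1}(perp_hcompE j) perp_j add0r.
rewrite j_axis in Uj NUj j_least; exists (hcomp ip h j); split=> // y Uy NUy.
by apply: j_least; apply/in_pair.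
Qed.

Lemma f_add_le_max U W : ip U h = 0 -> ip W h = 0 ->
  f (ipnorm ip W) + f (ipnorm ip U) <=
    Num.max (f (ipnorm ip (W + U))) (f (ipnorm ip (W - U))).
Proof.
move=> Uh Wh; have NUh : ip (- U) h = 0 by rewrite (ipNl ip_inner) Uh oppr0.
have [t [Ut _ t_least]] := join_opp_on_axis Uh.
set M := Num.max _ _.
have UM : le U (W + M *: h).
  by rewrite /fle hcomp_lift // perp_lift // perp_id // hcomp_orth // subr0 le_max lexx orbT.
have NUM : le (- U) (W + M *: h).
  by rewrite /fle hcomp_lift // perp_lift // perp_id // hcomp_orth // subr0 opprK le_max lexx.
move: Ut (t_least _ UM NUM); rewrite /fle hcomp_lift // perp_lift //.
rewrite hcomp_axis perp_axis perp_id // hcomp_orth // sub0r !subr0 (ipnormN ip_inner).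
lra.
Qed.

End SpongeOrder.

Theorem mainTheorem15 (R : realType) (E : lmodType R) (ip : E -> E -> R)
  (h : E) (f : R -> R) :
  hilbert ip -> dim_ge2 ip -> ip h h = 1 ->
  (forall d, 0 <= d -> 0 <= f d) ->
  (forall d, 0 <= d -> (f d = 0 <-> d = 0)) ->
  sponge (fle ip h f) ->
  (forall d e : R, 0 <= d -> 0 <= e ->
     f d + f e <= Num.max (f (d + e)) (f `|d - e|)) /\
  (dim_ge3 ip ->
   forall d e : R, 0 <= d -> 0 <= e ->
     f d + f e <= f (Num.sqrt (d ^+ 2 + e ^+ 2))).
Proof.
move=> [ip_inner _] [u [v uv]] h_unit f_ge0 f_eq0 [_ has_joins _].
have key := f_add_le_max ip_inner h_unit f_ge0 (fun d d0 => (f_eq0 d d0).1) has_joins.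
have scale_orth a n : ip n h = 0 -> ip (a *: n) h = 0.
  by move=> nh; rewrite (ipZl ip_inner) nh mulr0.
split.
- move=> d e d0 e0; have [n [n_unit nh]] := exists_unit_orth ip_inner h uv.
  have := key _ _ (scale_orth e n nh) (scale_orth d n nh).
  rewrite -scalerDl -scalerBl !(ipnormZ ip_inner) //.
  by rewrite (ger0_norm d0) (ger0_norm e0) (ger0_norm (addr_ge0 d0 e0)).
- move=> [u' [v' [w [[uu vv ww] [uv' uw vw]]]]] d e d0 e0.
  have [n [m [nm [nh mh]]]] := exists_orthonormal_orth ip_inner h (And3 uu vv uv') ww uw vw.
  have := key _ _ (scale_orth e m mh) (scale_orth d n nh).
  rewrite -scaleNr !(ipnorm_orthonormal ip_inner) // sqrrN maxxx.
  case: nm => n_unit m_unit _.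
  by rewrite !(ipnormZ ip_inner) // !ger0_norm.
Qed.
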